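(* Let $\{w^k\}$, $w^k=(x_1^k,\dots,x_m^k,y^k)$, be generated by the L-GADMM iteration. Then for every $k\ge1$, $$(x_m^k-x_m^{k+1})^\top A_m^\top(y^k-y^{k+1})\ \ge\ \tfrac12\|x_m^k-x_m^{k+1}\|_{P_m}^2-\tfrac12\|x_m^{k-1}-x_m^k\|_{P_m}^2.$$
   Context: Standing setting. Let $m\ge 2$, $\ell$, $n_1,\dots,n_m$ be positive integers. For $i=1,\dots,m$ let $\theta_i:\mathbb{R}^{n_i}\to\mathbb{R}$ be convex, $\mathcal{X}_i\subseteq\mathbb{R}^{n_i}$ nonempty closed convex, $A_i\in\mathbb{R}^{\ell\times n_i}$ of full column rank, and $b\in\mathbb{R}^\ell$. Problem (P): $\min\{\sum_{i=1}^m\theta_i(x_i):\sum_{i=1}^mA_ix_i=b,\ x_i\in\mathcal{X}_i\}$, assumed to have a nonempty solution set. Write $u=(x_1,\dots,x_m)$, $w=(x_1,\dots,x_m,y)$ with $y\in\mathbb{R}^\ell$, $\theta(u)=\sum_i\theta_i(x_i)$, $F(w)=(-A_1^\top y,\dots,-A_m^\top y,\ \sum_iA_ix_i-b)$, $\mathcal{W}=\mathcal{X}_1\times\cdots\times\mathcal{X}_m\times\mathbb{R}^\ell$, and $\mathcal{W}^*=\{w^*\in\mathcal{W}:\theta(u)-\theta(u^* )+(w-w^* )^\top F(w^* )\ge0\ \forall w\in\mathcal{W}\}$ (nonempty). For symmetric $G$, $\|v\|_G^2:=v^\top Gv$; $\|\cdot\|$ is the Euclidean norm. Vectors are partitioned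 as $w=(R,x_m,y)$ with $R=(x_1,\dots,x_{m-1})$. Parameters: $\rho>0$, $\gamma\in(0,2)$, symmetric positive definite $P_i\in\mathbb{R}^{n_i\times n_i}$ ($i=1,\dots,m$) such that $G_1\succ0$, where $G_1$ is the symmetric block matrix with diagonal blocks $P_1,\dots,P_{m-1}$ and $(i,j)$ block $-\rho A_i^\top A_j$ for $i\ne j$, $1\le i,j\le m-1$. Matrices (w.r.t. the partition $(R,x_m,y)$): $Q=\begin{pmatrix}G_1&0&0\\0&\rho A_m^\top A_m+P_m&(1-\gamma)A_m^\top\\0&-A_m&\frac1\rho I_\ell\end{pmatrix}$, $M=\begin{pmatrix}I&0&0\\0&I_{n_m}&0\\0&-\rho A_m&\gamma I_\ell\end{pmatrix}$, $H=\begin{pmatrix}G_1&0&0\\0&P_m+\frac\rho\gamma A_m^\top A_m&\frac{1-\gamma}\gamma A_m^\top\\0&\frac{1-\gamma}\gamma A_m&\frac1{\gamma\rho}I_\ell\end{pmatrix}$, $N=Q^\top+Q-M^\top HM$. L-GADMM iteration: from an arbitrary $w^0=(x_1^0,\dots,x_m^0,y^0)\in\mathcal{W}$, for $k=0,1,2,\dots$: $x_j^{k+1}=\arg\min_{x_j\in\mathcal{X}_j}\{\theta_j(x_j)+\frac\rho2\|A_jx_j+\sum_{i=1,i\ne j}^mA_ix_i^k-b-\frac{y^k}\rho\|^2+\frac12\|x_j-x_j^k\|_{P_j}^2\}$ for $j=1,\dots,m-1$; $x_m^{k+1}=\arg\min_{x_m\in\mathcal{X}_m}\{\theta_m(x_m)+\frac\rho2\|\gamma\sum_{i=1}^{m-1}A_ix_i^{k+1}+(1-\gamma)(b-A_mx_m^k)+A_mx_m-b-\frac{y^k}\rho\|^2+\frac12\|x_m-x_m^k\|_{P_m}^2\}$;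 $y^{k+1}=y^k-\rho\big(\gamma\sum_{i=1}^{m-1}A_ix_i^{k+1}+(1-\gamma)(b-A_mx_m^k)+A_mx_m^{k+1}-b\big)$. Auxiliary sequence: $\bar w^k=(\bar x_1^k,\dots,\bar x_m^k,\bar y^k)$ with $\bar x_i^k=x_i^{k+1}$ ($i=1,\dots,m$) and $\bar y^k=y^k-\rho(\sum_{i=1}^{m-1}A_ix_i^{k+1}+A_mx_m^k-b)$; $\bar u^k=(\bar x_1^k,\dots,\bar x_m^k)$, $R^k=(x_1^k,\dots,x_{m-1}^k)$, $\bar R^k=(\bar x_1^k,\dots,\bar x_{m-1}^k)$. *)

From HB Require Import structures.
From mathcomp Require Import all_boot all_order all_algebra.
From mathcomp Require Import all_classical all_reals all_analysis.
Set Implicit Arguments. Unset Strict Implicit. Unset Printing Implicit Defensive.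
Import Order.TTheory GRing.Theory Num.Theory.
Local Open Scope ring_scope.
Local Open Scope classical_set_scope.

Definition dotv (R : realType) (n : nat) (u v : 'cV[R]_n) : R := (u^T *m v) 0 0.

Definition sqnorm (R : realType) (n : nat) (v : 'cV[R]_n) : R := dotv v v.

Definition sqnormG (R : realType) (n : nat) (G : 'M[R]_n) (v : 'cV[R]_n) : R :=
  (v^T *m G *m v) 0 0.

Definition convex_fun (R : realType) (n : nat) (f : 'cV[R]_n -> R) : Prop :=
  forall (x y : 'cV[R]_n) (t : R), 0 <= t -> t <= 1 ->
    f (t *: x + (1 - t) *: y) <= t * f x + (1 - t) * f y.

Definition sym_posdef (R : realType) (n : nat) (P : 'M[R]_n) : Prop :=
  P^T = P /\ forall v : 'cV[R]_n, v != 0 -> 0 < sqnormG P v.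

(* G_1 > 0: the quadratic form of the block matrix with diagonal blocks P_i
   and off-diagonal blocks -rho A_i^T A_j (1 <= i <> j <= m-1), evaluated on
   R = (x_1,...,x_{m-1}) (blocks i with val i < m.-1) *)
Definition G1_posdef (R : realType) (m l : nat) (n : 'I_m -> nat)
  (A : forall i : 'I_m, 'M[R]_(l, n i)) (P : forall i : 'I_m, 'M[R]_(n i))
  (rho : R) : Prop :=
  forall xs : forall i : 'I_m, 'cV[R]_(n i),
    (exists i : 'I_m, (val i < m.-1)%N /\ xs i != 0) ->
    0 < \sum_(i < m | (val i < m.-1)%N) sqnormG (P i) (xs i)
        - rho * \sum_(i < m | (val i < m.-1)%N)
                  \sum_(j < m | ((val j < m.-1)%N && (j != i)))
                     dotv (A i *m xs i) (A j *m xs j).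

(* closedness in R^n with the (product = Euclidean) topology of matrices over R *)
Definition closed_cv (R : realType) (n : nat) (X : set 'cV[R]_n) : Prop :=
  @closed 'cV[R^o]_n X.

From HB Require Import structures.
From mathcomp Require Import all_boot all_order all_algebra.
From mathcomp Require Import all_classical all_reals all_analysis.
From mathcomp Require Import ring lra.
Set Implicit Arguments. Unset Strict Implicit. Unset Printing Implicit Defensive.
Import Order.TTheory GRing.Theory Num.Theory.
Local Open Scope ring_scope.
Local Open Scope classical_set_scope.

(* The x_m-update is a proximal step: it minimises theta_m + rho/2 ||A_m z + c||^2
   + 1/2 ||z - x_m^k||_P^2 over a convex set, and the multiplier update makes
   y^{k+1} = -rho (A_m x_m^{k+1} + c).  The first-order optimality condition of two
   consecutive steps, each tested at the other iterate, add up to the claim: the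
   theta-terms cancel and the remaining P-terms are completed to a square. *)

Section Proximal.
Variable R : realType.

Lemma dotvE n (u v : 'cV[R]_n) : dotv u v = \sum_i u i 0 * v i 0.
Proof. by rewrite /dotv !mxE; apply: eq_bigr => i _; rewrite mxE. Qed.

Lemma dotvC n (u v : 'cV[R]_n) : dotv u v = dotv v u.
Proof. by rewrite !dotvE; apply: eq_bigr => i _; rewrite mulrC. Qed.

Lemma dotvDl n (u w v : 'cV[R]_n) : dotv (u + w) v = dotv u v + dotv w v.
Proof. by rewrite !dotvE -big_split; apply: eq_bigr => i _; rewrite mxE mulrDl. Qed.

Lemma dotvDr n (u w v : 'cV[R]_n) : dotv v (u + w) = dotv v u + dotv v w.
Proof. by rewrite dotvC dotvDl !(dotvC v). Qed.

Lemma dotvZl n a (u v : 'cV[R]_n) : dotv (a *: u) v = a * dotv u v.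
Proof. by rewrite !dotvE mulr_sumr; apply: eq_bigr => i _; rewrite mxE mulrA. Qed.

Lemma dotvZr n a (u v : 'cV[R]_n) : dotv v (a *: u) = a * dotv v u.
Proof. by rewrite dotvC dotvZl dotvC. Qed.

Lemma dotvNl n (u v : 'cV[R]_n) : dotv (- u) v = - dotv u v.
Proof. by rewrite -scaleN1r dotvZl mulN1r. Qed.

Lemma dotvNr n (u v : 'cV[R]_n) : dotv v (- u) = - dotv v u.
Proof. by rewrite dotvC dotvNl dotvC. Qed.

Lemma dotvBl n (u w v : 'cV[R]_n) : dotv (u - w) v = dotv u v - dotv w v.
Proof. by rewrite dotvDl dotvNl. Qed.

Lemma dotvBr n (u w v : 'cV[R]_n) : dotv v (u - w) = dotv v u - dotv v w.
Proof. by rewrite dotvDr dotvNr. Qed.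

Lemma dotv_trmx l n (M : 'M[R]_(l, n)) w v : dotv (M^T *m w) v = dotv w (M *m v).
Proof. by rewrite /dotv trmx_mul trmxK mulmxA. Qed.

Lemma dotv_sym n (P : 'M[R]_n) u v : P^T = P -> dotv u (P *m v) = dotv (P *m u) v.
Proof. by move=> HP; rewrite -{2}HP dotv_trmx. Qed.

Lemma sqnormGE n (P : 'M[R]_n) v : sqnormG P v = dotv v (P *m v).
Proof. by rewrite /sqnormG /dotv mulmxA. Qed.

Lemma sqnormG_ge0 n (P : 'M[R]_n) v : sym_posdef P -> 0 <= sqnormG P v.
Proof.
case=> _ Ppos; have [->|v0] := eqVneq v 0; last exact/ltW/Ppos.
by rewrite /sqnormG mulmx0 mxE.
Qed.

Lemma ler_of_le_addr_tmul (a b c : R) :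
  (forall t, 0 < t -> t <= 1 -> a <= b + t * c) -> a <= b.
Proof.
move=> H; rewrite leNgt; apply/negP => ba.
have [c_le0|c_gt0] := lerP c 0; first by have := H 1 ltr01 (lexx _); lra.
(* t := (a - b) / (a - b + c) lies in (0, 1] and still violates a <= b + t c *)
pose t := (a - b) / ((a - b) + c).
have d_gt0 : 0 < (a - b) + c by lra.
have tE : t * ((a - b) + c) = a - b by rewrite /t mulfVK // gt_eqF.
have t_gt0 : 0 < t by rewrite /t divr_gt0 // subr_gt0.
have t_le1 : t <= 1 by rewrite /t ler_pdivrMr // mul1r; lra.
by have := H t t_gt0 t_le1; nra.
Qed.

Lemma prox_step_vi n l (th : 'cV[R]_n -> R) (X : set 'cV[R]_n) (M : 'M[R]_(l, n))
    (P : 'M[R]_n) (c : 'cV[R]_l) (r : R) (xs x0 : 'cV[R]_n) :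
  convex_fun th -> convex_set X -> P^T = P -> X xs ->
  (forall z, X z ->
     th xs + r / 2 * sqnorm (M *m xs + c) + 1 / 2 * sqnormG P (xs - x0)
     <= th z + r / 2 * sqnorm (M *m z + c) + 1 / 2 * sqnormG P (z - x0)) ->
  forall z, X z ->
    th xs - th z <= r * dotv (M *m xs + c) (M *m (z - xs))
                    + dotv (P *m (xs - x0)) (z - xs).
Proof.
move=> th_cvx X_cvx HP Xxs xs_min z Xz.
set u := M *m xs + c; set v := M *m (z - xs); set a := xs - x0; set h := z - xs.
(* compare xs with the point xs + t (z - xs) of the segment and let t -> 0 *)
apply: (@ler_of_le_addr_tmul _ _ (r / 2 * dotv v v + 1 / 2 * dotv h (P *m h)))
  => t t_gt0 t_le1.
have segE : t *: z + (1 - t) *: xs = xs + t *: h.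
  by apply/matrixP => i j; rewrite !mxE; ring.
have Xzt : X (xs + t *: h).
  rewrite -segE; have := X_cvx z xs (Itv01 (ltW t_gt0) t_le1) (mem_set Xz) (mem_set Xxs).
  by rewrite inE.
have := xs_min _ Xzt.
have -> : M *m (xs + t *: h) + c = u + t *: v.
  by rewrite mulmxDr scalemxAr addrAC.
have -> : xs + t *: h - x0 = a + t *: h.
  by apply/matrixP => i j; rewrite !mxE; ring.
have th_seg := th_cvx z xs t (ltW t_gt0) t_le1; rewrite segE in th_seg.
rewrite -/u -/a; clearbody u v a h.
rewrite /sqnorm !sqnormGE !mulmxDr -!scalemxAr !dotvDl !dotvDr !dotvZl !dotvZr.
rewrite (dotvC v u) (dotv_sym a h HP) (dotvC (P *m a) h).
nra.
Qed.

Lemma prox_steps_monotone n l (th : 'cV[R]_n -> R) (M : 'M[R]_(l, n)) (P : 'M[R]_n)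
    (x0 x1 x2 : 'cV[R]_n) (y1 y2 : 'cV[R]_l) :
  sym_posdef P ->
  th x1 - th x2 <= - dotv y1 (M *m (x2 - x1)) + dotv (P *m (x1 - x0)) (x2 - x1) ->
  th x2 - th x1 <= - dotv y2 (M *m (x1 - x2)) + dotv (P *m (x2 - x1)) (x1 - x2) ->
  1 / 2 * sqnormG P (x1 - x2) - 1 / 2 * sqnormG P (x0 - x1)
  <= dotv (M^T *m (y1 - y2)) (x1 - x2).
Proof.
move=> HP; have HPs : P^T = P by case: HP.
have sq_ge0 := sqnormG_ge0 (x1 - x2 - (x0 - x1)) HP.
have -> : x2 - x1 = - (x1 - x2) by rewrite opprB.
have -> : x1 - x0 = - (x0 - x1) by rewrite opprB.
move: sq_ge0; set d := x1 - x2; set f := x0 - x1; clearbody d f.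
rewrite !sqnormGE dotv_trmx dotvBl !mulmxN !dotvNl !dotvNr !mulmxBr !dotvBl !dotvBr.
rewrite (dotvC (P *m d) d) (dotvC d (P *m f)) (dotv_sym f d HPs).
lra.
Qed.

End Proximal.

Unset Implicit Arguments.
Theorem lemma4p4 (R : realType) (m l : nat) (n : 'I_m -> nat)
  (theta : forall i : 'I_m, 'cV[R]_(n i) -> R)
  (X : forall i : 'I_m, set 'cV[R]_(n i))
  (A : forall i : 'I_m, 'M[R]_(l, n i))
  (b : 'cV[R]_l)
  (rho gamma : R)
  (P : forall i : 'I_m, 'M[R]_(n i))
  (x : nat -> forall i : 'I_m, 'cV[R]_(n i))
  (y : nat -> 'cV[R]_l) :
  (2 <= m)%N ->
  (forall i, (0 < n i)%N) ->
  (0 < l)%N ->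
  (forall i, convex_fun (theta i)) ->
  (forall i, X i !=set0 /\ closed_cv (X i) /\ convex_set (X i)) ->
  (forall i, \rank (A i) = n i) ->
  (* (P) has a nonempty solution set *)
  (exists us : forall i : 'I_m, 'cV[R]_(n i),
     (forall i, X i (us i)) /\ \sum_(i < m) A i *m us i = b /\
     forall u : forall i : 'I_m, 'cV[R]_(n i),
       (forall i, X i (u i)) -> \sum_(i < m) A i *m u i = b ->
       \sum_(i < m) theta i (us i) <= \sum_(i < m) theta i (u i)) ->
  (* W^* is nonempty *)
  (exists (us : forall i : 'I_m, 'cV[R]_(n i)) (ys : 'cV[R]_l),
     (forall i, X i (us i)) /\
     forall (u : forall i : 'I_m, 'cV[R]_(n i)) (yy : 'cV[R]_l),
       (forall i, X i (u i)) ->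
       0 <= \sum_(i < m) theta i (u i) - \sum_(i < m) theta i (us i)
            + \sum_(i < m) dotv (u i - us i) (- ((A i)^T *m ys))
            + dotv (yy - ys) (\sum_(i < m) A i *m us i - b)) ->
  0 < rho ->
  0 < gamma -> gamma < 2 ->
  (forall i, sym_posdef (P i)) ->
  G1_posdef A P rho ->
  (* initial point w^0 in W *)
  (forall i, X i (x 0%N i)) ->
  (* x_j-subproblems, j = 1, ..., m-1 *)
  (forall (k : nat) (j : 'I_m), (val j < m.-1)%N ->
     X j (x k.+1 j) /\
     forall z : 'cV[R]_(n j), X j z ->
       theta j (x k.+1 j)
         + rho / 2 * sqnorm (A j *m x k.+1 j
              + \sum_(i < m | i != j) A i *m x k i - b - rho^-1 *: y k)
         + 1 / 2 * sqnormG (P j) (x k.+1 j - x k j)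
       <= theta j z
         + rho / 2 * sqnorm (A j *m z
              + \sum_(i < m | i != j) A i *m x k i - b - rho^-1 *: y k)
         + 1 / 2 * sqnormG (P j) (z - x k j)) ->
  (* x_m-subproblem *)
  (forall (k : nat) (j : 'I_m), val j = m.-1 ->
     X j (x k.+1 j) /\
     forall z : 'cV[R]_(n j), X j z ->
       theta j (x k.+1 j)
         + rho / 2 * sqnorm (gamma *: \sum_(i < m | (val i < m.-1)%N) A i *m x k.+1 i
              + (1 - gamma) *: (b - A j *m x k j) + A j *m x k.+1 j - b
              - rho^-1 *: y k)
         + 1 / 2 * sqnormG (P j) (x k.+1 j - x k j)
       <= theta j z
         + rho / 2 * sqnorm (gamma *: \sum_(i < m | (val i < m.-1)%N) A i *m x k.+1 i
              + (1 - gamma) *: (b - A j *m x k j) + A j *m z - b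
              - rho^-1 *: y k)
         + 1 / 2 * sqnormG (P j) (z - x k j)) ->
  (* multiplier update *)
  (forall (k : nat) (j : 'I_m), val j = m.-1 ->
     y k.+1 = y k - rho *: (gamma *: \sum_(i < m | (val i < m.-1)%N) A i *m x k.+1 i
              + (1 - gamma) *: (b - A j *m x k j) + A j *m x k.+1 j - b)) ->
  forall (j : 'I_m), val j = m.-1 ->
  forall k : nat, (1 <= k)%N ->
    dotv ((A j)^T *m (y k - y k.+1)) (x k j - x k.+1 j)
    >= 1 / 2 * sqnormG (P j) (x k j - x k.+1 j)
       - 1 / 2 * sqnormG (P j) (x k.-1 j - x k j).
Proof.
move=> _ _ _ theta_cvx X_cvx _ _ _ rho_gt0 _ _ P_posdef _ _ _ xm_min y_upd j jE k k_ge1.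
have Pj_sym : (P j)^T = P j by case: (P_posdef j).
pose c s := gamma *: \sum_(i < m | (val i < m.-1)%N) A i *m x s.+1 i
            + (1 - gamma) *: (b - A j *m x s j) - b - rho^-1 *: y s.
have residualE s z : gamma *: \sum_(i < m | (val i < m.-1)%N) A i *m x s.+1 i
    + (1 - gamma) *: (b - A j *m x s j) + A j *m z - b - rho^-1 *: y s
    = A j *m z + c s.
  by rewrite /c -!addrA [RHS]addrCA; congr (_ + _); exact: addrCA.
have yE s : rho *: (A j *m x s.+1 j + c s) = - y s.+1.
  rewrite -residualE (y_upd s j jE) scalerBr scalerA mulfV ?gt_eqF // scale1r.
  by rewrite opprB.
have step_vi s z : X j z ->
    theta j (x s.+1 j) - theta j z
    <= - dotv (y s.+1) (A j *m (z - x s.+1 j))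
       + dotv (P j *m (x s.+1 j - x s j)) (z - x s.+1 j).
  move=> Xz; have [Xs xs_min] := xm_min s j jE.
  have [_ [_ Xj_cvx]] := X_cvx j.
  have xs_prox z' : X j z' ->
      theta j (x s.+1 j) + rho / 2 * sqnorm (A j *m x s.+1 j + c s)
        + 1 / 2 * sqnormG (P j) (x s.+1 j - x s j)
      <= theta j z' + rho / 2 * sqnorm (A j *m z' + c s)
        + 1 / 2 * sqnormG (P j) (z' - x s j).
    by move=> Xz'; rewrite -!residualE; exact: xs_min.
  have := prox_step_vi (theta_cvx j) Xj_cvx Pj_sym Xs xs_prox Xz.
  by rewrite -dotvZl yE dotvNl.
case: k k_ge1 => [//|k] _ /=.
have X1 : X j (x k.+1 j) by case: (xm_min k j jE).
have X2 : X j (x k.+2 j) by case: (xm_min k.+1 j jE).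
exact: prox_steps_monotone (P_posdef j) (step_vi k _ X2) (step_vi k.+1 _ X1).
Qed.
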